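(* Let $M,N\ge 0$ be integers, $a_0,\dots,a_M\in\mathbb{R}$, $f_M(x)=\sum_{m=0}^M a_mT_m(x)$, and set $a_{M+1}=a_{M+2}=0$. For $0\le n\le N$ and $y\in[-1,1]$ let $\tilde R_n(y)=\int_{-1}^{y}f_M(y-1-t)T_n(t)\,\mathrm{d}t$, and let $R=(R_{k,n})$, $0\le k\le M+N+1$, $0\le n\le N$, be the matrix of Chebyshev coefficients defined by $\tilde R_n(y)=\sum_{k=0}^{M+N+1}R_{k,n}T_k(y)$. Then the zeroth column of $R$ is $$R_{k,0}=\begin{cases}0, & k>M+1,\\[1mm] \dfrac{a_{k-1}-a_{k+1}}{2k}, & 2\le k\le M+1,\\[2mm] a_0-\dfrac{a_2}{2}, & k=1,\\[2mm] \displaystyle\sum_{j=1}^{M+1}(-1)^{j+1}R_{j,0}, & k=0.\end{cases}$$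
   Context: $T_m(x)=\cos(m\arccos x)$ is the $m$-th Chebyshev polynomial. Each $\tilde R_n$ is a polynomial in $y$ of degree at most $M+n+1\le M+N+1$, so the coefficients $R_{k,n}$ are well defined, with $R_{k,n}=0$ for $k>M+n+1$. The matrix $R$ is called the (Chebyshev) convolution matrix of $f_M$. *)

From Stdlib Require Import Reals.
From Coquelicot Require Import Coquelicot.
Open Scope R_scope.

Definition chebT (m : nat) (x : R) : R := cos (INR m * acos x).

Definition fM (a : nat -> R) (M : nat) (x : R) : R :=
  sum_f_R0 (fun m => a m * chebT m x) M.

Definition aext (a : nat -> R) (M : nat) (m : nat) : R :=
  if Nat.leb m M then a m else 0.

Definition Rtilde (a : nat -> R) (M n : nat) (y : R) : R :=
  RInt (fun t => fM a M (y - 1 - t) * chebT n t) (-1) y.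

Definition Rcol0_pos (a : nat -> R) (M k : nat) : R :=
  if Nat.ltb (S M) k then 0
  else if Nat.eqb k 1 then a 0%nat - aext a M 2%nat / 2
  else (aext a M (k - 1)%nat - aext a M (k + 1)%nat) / (2 * INR k).

Definition Rcol0 (a : nat -> R) (M k : nat) : R :=
  match k with
  | O => sum_f_R0 (fun i => (-1) ^ (i + 2)%nat * Rcol0_pos a M (S i)) M
         (* = sum_{j=1}^{M+1} (-1)^{j+1} R_{j,0}, with j = i+1 *)
  | S _ => Rcol0_pos a M k
  end.

(* Substituting s = y - 1 - t turns tilde R_0(y) into the integral of f_M over
   [-1, y].  Since T_k' = k U_{k-1} and U_k - U_{k-2} = 2 T_k, the series
   sum_k R_{k,0} T_k with the claimed R_{k,0} (k >= 1) is an antiderivative of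
   f_M, the boundary terms vanishing because a_{M+1} = a_{M+2} = 0; the claimed
   R_{0,0} is exactly the constant making it vanish at -1, where T_k = (-1)^k. *)

From Stdlib Require Import Reals Lra Lia.
From Coquelicot Require Import Coquelicot.
Open Scope R_scope.

Lemma sum_f_R0_zero_tail g M N :
  (forall i, (M < i)%nat -> g i = 0) -> sum_f_R0 g (M + N) = sum_f_R0 g M.
Proof.
  intros Hg. induction N as [|N IHN]; [now rewrite Nat.add_0_r|].
  rewrite Nat.add_succ_r, tech5, IHN, Hg by lia. ring.
Qed.

Lemma is_RInt_reflect (F f : R -> R) a b :
  (forall x, is_derive F x (f x)) -> (forall x, continuous f x) ->
  is_RInt (fun t => f (a + b - t)) a b (F b - F a).
Proof.
  intros HF Hf.
  replace (F b - F a) with (- F (a + b - b) - - F (a + b - a))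
    by (replace (a + b - b) with a by ring; replace (a + b - a) with b by ring; ring).
  apply (is_RInt_derive (fun t => - F (a + b - t))).
  - intros t _.
    replace (f (a + b - t)) with (- (-1 * f (a + b - t))) by ring.
    apply (is_derive_opp (V := R_NormedModule)).
    apply (is_derive_comp (V := R_NormedModule) F (fun t => a + b - t)); [apply HF|].
    auto_derive; [exact I | ring].
  - intros t _. apply (continuous_comp (fun t => a + b - t) f); [| apply Hf].
    apply (continuous_minus (V := R_NormedModule)); [apply continuous_const | apply continuous_id].
Qed.

Fixpoint chebTp (n : nat) (x : R) : R :=
  match n with
  | O => 1
  | S m => match m with O => x | S p => 2 * x * chebTp m x - chebTp p x end
  end.

(* [chebUp n] is U_{n-1}, the Chebyshev polynomial of the second kind, with
   U_{-1} = 0; the shift gives the uniform derivative T_n' = n U_{n-1}. *)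
Fixpoint chebUp (n : nat) (x : R) : R :=
  match n with
  | O => 0
  | S m => match m with O => 1 | S p => 2 * x * chebUp m x - chebUp p x end
  end.

Lemma chebTp_SS n x : chebTp (S (S n)) x = 2 * x * chebTp (S n) x - chebTp n x.
Proof. reflexivity. Qed.

Lemma chebUp_SS n x : chebUp (S (S n)) x = 2 * x * chebUp (S n) x - chebUp n x.
Proof. reflexivity. Qed.

Lemma chebTp_S_chebUp n x : chebTp (S n) x = x * chebUp (S n) x - chebUp n x.
Proof.
  revert n; apply Nat.pair_induction; [now intros ? ? -> | simpl; ring | simpl; ring |].
  intros n IH1 IH2. rewrite chebTp_SS, IH1, IH2, !chebUp_SS. ring.
Qed.

Lemma chebUp_SS_sub n x : chebUp (S (S n)) x - chebUp n x = 2 * chebTp (S n) x.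
Proof. rewrite chebTp_S_chebUp, chebUp_SS. ring. Qed.

Lemma chebTp_m1 n : chebTp n (-1) = (-1) ^ n.
Proof.
  revert n; apply Nat.pair_induction; [now intros ? ? -> | simpl; ring | simpl; ring |].
  intros n IH1 IH2. rewrite chebTp_SS, IH1, IH2. simpl. ring.
Qed.

Lemma chebT_chebTp n x : -1 <= x <= 1 -> chebT n x = chebTp n x.
Proof.
  intros Hx. unfold chebT. set (t := acos x).
  assert (Ht : cos t = x) by (apply cos_acos; lra).
  revert n; apply Nat.pair_induction; [now intros ? ? -> | | |].
  - simpl. rewrite Rmult_0_l. apply cos_0.
  - simpl. rewrite Rmult_1_l. exact Ht.
  - intros n IH1 IH2. rewrite chebTp_SS, <- IH1, <- IH2, !S_INR.
    replace ((INR n + 1 + 1) * t) with ((INR n + 1) * t + t) by ring.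
    replace (INR n * t) with ((INR n + 1) * t - t) by ring.
    rewrite cos_plus, cos_minus, Ht. ring.
Qed.

Lemma is_derive_chebTp n x : is_derive (chebTp n) x (INR n * chebUp n x).
Proof.
  revert n; apply Nat.pair_induction; [now intros ? ? -> | | |].
  - replace (INR 0 * chebUp 0 x) with 0 by (simpl; ring).
    apply (is_derive_const (K := R_AbsRing) (V := R_NormedModule)).
  - replace (INR 1 * chebUp 1 x) with 1 by (simpl; ring).
    apply (is_derive_id (K := R_AbsRing)).
  - intros n IH1 IH2.
    replace (INR (S (S n)) * chebUp (S (S n)) x)
      with (2 * chebTp (S n) x + 2 * x * (INR (S n) * chebUp (S n) x) - INR n * chebUp n x)
      by (rewrite chebTp_S_chebUp, !chebUp_SS, !S_INR; ring).
    apply (is_derive_minus (V := R_NormedModule)); [| exact IH1].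
    replace (2 * chebTp (S n) x + 2 * x * (INR (S n) * chebUp (S n) x))
      with (2 * 1 * chebTp (S n) x + 2 * x * (INR (S n) * chebUp (S n) x)) by ring.
    apply (is_derive_mult (K := R_AbsRing) (fun t => 2 * t)); [| exact IH2 | exact Rmult_comm].
    apply is_derive_scal, (is_derive_id (K := R_AbsRing)).
Qed.

Definition cheb_series (c : nat -> R) (K : nat) (x : R) : R :=
  sum_f_R0 (fun k => c k * chebTp k x) K.

Lemma is_derive_cheb_series c K x :
  is_derive (cheb_series c K) x (sum_f_R0 (fun k => c k * (INR k * chebUp k x)) K).
Proof.
  induction K as [|K IHK].
  - apply is_derive_scal, is_derive_chebTp.
  - apply (is_derive_plus (V := R_NormedModule)); [exact IHK |].
    apply is_derive_scal, is_derive_chebTp.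
Qed.

(* The coefficient of T_1 is special because T_0 integrates to T_1, whereas
   T_k integrates to (T_{k+1}/(k+1) - T_{k-1}/(k-1))/2 for k >= 2. *)
Definition cheb_antider_coef (b : nat -> R) (k : nat) : R :=
  if Nat.eqb k 1 then b 0%nat - b 2%nat / 2
  else (b (k - 1)%nat - b (k + 1)%nat) / (2 * INR k).

Definition cheb_antider (b : nat -> R) (c0 : R) (k : nat) : R :=
  match k with O => c0 | S _ => cheb_antider_coef b k end.

Lemma cheb_antider_coef_telescope b n x :
  sum_f_R0 (fun i => cheb_antider_coef b (S i) * (INR (S i) * chebUp (S i) x)) n
  = cheb_series b n x - (b (S n) * chebUp n x + b (S (S n)) * chebUp (S n) x) / 2.
Proof.
  induction n as [|n IHn].
  - unfold cheb_antider_coef, cheb_series. simpl. field.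
  - rewrite tech5, IHn. unfold cheb_series. rewrite tech5.
    unfold cheb_antider_coef. simpl Nat.eqb. cbv iota.
    replace (S (S n) - 1)%nat with (S n) by lia.
    replace (S (S n) + 1)%nat with (S (S (S n))) by lia.
    replace (chebTp (S n) x) with ((chebUp (S (S n)) x - chebUp n x) / 2)
      by (rewrite chebUp_SS_sub; field).
    field. apply not_0_INR. lia.
Qed.

Lemma is_derive_cheb_antider b c0 n x :
  is_derive (cheb_series (cheb_antider b c0) (S n)) x
    (cheb_series b n x - (b (S n) * chebUp n x + b (S (S n)) * chebUp (S n) x) / 2).
Proof.
  rewrite <- cheb_antider_coef_telescope.
  replace (sum_f_R0 _ n)
    with (sum_f_R0 (fun k => cheb_antider b c0 k * (INR k * chebUp k x)) (S n)).
  - apply is_derive_cheb_series.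
  - rewrite decomp_sum by lia. cbn [pred cheb_antider INR chebUp]. ring.
Qed.

Lemma cheb_antider_coef_eq0 b M k :
  (forall m, (M < m)%nat -> b m = 0) -> (S M < k)%nat -> cheb_antider_coef b k = 0.
Proof.
  intros Hb Hk. unfold cheb_antider_coef.
  rewrite (proj2 (Nat.eqb_neq k 1)) by lia.
  rewrite !Hb by lia. unfold Rdiv. ring.
Qed.

Lemma cheb_series_antider_m1 b c0 n :
  cheb_series (cheb_antider b c0) (S n) (-1)
  = c0 + sum_f_R0 (fun i => (-1) ^ S i * cheb_antider_coef b (S i)) n.
Proof.
  unfold cheb_series. rewrite decomp_sum by lia. cbn [pred cheb_antider].
  change (chebTp 0 (-1)) with 1. rewrite Rmult_1_r. f_equal.
  apply sum_eq. intros i _. rewrite chebTp_m1. apply Rmult_comm.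
Qed.

Lemma Rcol0_pos_cheb_antider_coef a M k :
  (1 <= k)%nat -> Rcol0_pos a M k = cheb_antider_coef (aext a M) k.
Proof.
  intros Hk. unfold Rcol0_pos, cheb_antider_coef, aext.
  destruct (Nat.ltb_spec (S M) k).
  - rewrite (proj2 (Nat.eqb_neq k 1)), !(proj2 (Nat.leb_gt _ M)) by lia.
    unfold Rdiv. ring.
  - destruct (Nat.eqb_spec k 1); [now subst | reflexivity].
Qed.

Lemma Rcol0_cheb_antider a M k : Rcol0 a M k = cheb_antider (aext a M) (Rcol0 a M 0) k.
Proof.
  destruct k as [|k]; [reflexivity|].
  apply Rcol0_pos_cheb_antider_coef. lia.
Qed.

Lemma fM_cheb_series a M s : -1 <= s <= 1 -> fM a M s = cheb_series a M s.
Proof.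
  intros Hs. apply sum_eq. intros k _. now rewrite chebT_chebTp.
Qed.

Lemma aext_gt a M m : (M < m)%nat -> aext a M m = 0.
Proof. intros Hm. unfold aext. now rewrite (proj2 (Nat.leb_gt m M)). Qed.

Lemma cheb_series_aext a M x : cheb_series (aext a M) M x = cheb_series a M x.
Proof.
  apply sum_eq. intros k Hk. unfold aext. now rewrite (proj2 (Nat.leb_le k M)).
Qed.

Lemma is_derive_cheb_antider_aext a M c0 x :
  is_derive (cheb_series (cheb_antider (aext a M) c0) (S M)) x (cheb_series a M x).
Proof.
  rewrite <- cheb_series_aext.
  replace (cheb_series (aext a M) M x) with (cheb_series (aext a M) M x -
    (aext a M (S M) * chebUp M x + aext a M (S (S M)) * chebUp (S M) x) / 2)
    by (rewrite !aext_gt by lia; field).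
  apply is_derive_cheb_antider.
Qed.

Lemma cheb_series_Rcol0_m1 a M :
  cheb_series (cheb_antider (aext a M) (Rcol0 a M 0)) (S M) (-1) = 0.
Proof.
  rewrite cheb_series_antider_m1. cbn [Rcol0].
  rewrite <- sum_plus, (sum_eq _ (fun _ => 0)), sum_cte; [ring |].
  intros i _. rewrite Rcol0_pos_cheb_antider_coef by lia.
  replace (i + 2)%nat with (S (S i)) by lia. simpl. ring.
Qed.

Lemma sum_Rcol0_chebT a M N y : -1 <= y <= 1 ->
  sum_f_R0 (fun k => Rcol0 a M k * chebT k y) (S M + N)
  = cheb_series (cheb_antider (aext a M) (Rcol0 a M 0)) (S M) y.
Proof.
  intros Hy. rewrite sum_f_R0_zero_tail.
  - apply sum_eq. intros k _. now rewrite (Rcol0_cheb_antider a M k), chebT_chebTp.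
  - intros [|k] Hk; [lia |].
    rewrite (Rcol0_cheb_antider a M (S k)). cbn [cheb_antider].
    rewrite (cheb_antider_coef_eq0 _ M); [ring | apply aext_gt | lia].
Qed.

Lemma Rtilde0_reflect a M y : -1 <= y <= 1 ->
  Rtilde a M 0 y = RInt (fun t => cheb_series a M (-1 + y - t)) (-1) y.
Proof.
  intros Hy. apply RInt_ext. intros t Ht.
  rewrite Rmin_left, Rmax_right in Ht by lra.
  unfold chebT. rewrite Rmult_0_l, cos_0, Rmult_1_r, fM_cheb_series by lra.
  f_equal. ring.
Qed.

Theorem theorem3p2 (M N : nat) (a : nat -> R) :
  forall y : R, -1 <= y <= 1 ->
    Rtilde a M 0 y = sum_f_R0 (fun k => Rcol0 a M k * chebT k y) (M + N + 1)%nat.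
Proof.
  intros y Hy.
  set (G := cheb_series (cheb_antider (aext a M) (Rcol0 a M 0)) (S M)).
  assert (HG' : forall x, is_derive G x (cheb_series a M x))
    by (intros x; apply is_derive_cheb_antider_aext).
  assert (Hcont : forall x, continuous (cheb_series a M) x).
  { intros x. apply (ex_derive_continuous (V := R_NormedModule)).
    eexists. apply is_derive_cheb_series. }
  replace (M + N + 1)%nat with (S M + N)%nat by lia.
  rewrite sum_Rcol0_chebT, Rtilde0_reflect by exact Hy.
  rewrite (is_RInt_unique _ _ _ _ (is_RInt_reflect G _ (-1) y HG' Hcont)).
  unfold G. rewrite cheb_series_Rcol0_m1. ring.
Qed.
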